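(* Let $q\ge2$ and let $f\colon\mathbb{N}_0\to\mathbb{U}$ be strongly $q$-multiplicative. Then either there exists an integer $0\le p<q-1$ such that $f(n)=e(np/(q-1))$ for all $n\in\mathbb{N}_0$, or $f$ is of Gelfond type of order $1$, i.e. there exists $\gamma<1$ such that $$\sup_{\alpha\in\mathbb{R}}\Big|\sum_{n=0}^{N-1}f(n)e(\alpha n)\Big|\ll N^{\gamma}\qquad(N\ge1).$$
   Context: $\mathbb{N}_0=\{0,1,\dots\}$, $\mathbb{U}=\{z\in\mathbb{C}:|z|=1\}$, $e(t)=e^{2\pi i t}$. $f$ is $q$-multiplicative if $f(m+n)=f(m)f(n)$ whenever $t,m,n\ge0$, $m<q^t$, $q^t\mid n$; it is strongly $q$-multiplicative if moreover $f(qn)=f(n)$ for all $n\in\mathbb{N}_0$. $X\ll Y$ means $|X|\le CY$ with $C$ independent of $N$. *)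

From Stdlib Require Import Reals Lra Lia.
From Coquelicot Require Import Coquelicot.
Open Scope R_scope.

Definition e (t : R) : C := (cos (2 * PI * t), sin (2 * PI * t)).

Definition unimodular (f : nat -> C) : Prop := forall n, Cmod (f n) = 1.

Definition q_multiplicative (q : nat) (f : nat -> C) : Prop :=
  forall t m n : nat, (m < q ^ t)%nat -> Nat.divide (q ^ t) n ->
    f (m + n)%nat = Cmult (f m) (f n).

Definition strongly_q_multiplicative (q : nat) (f : nat -> C) : Prop :=
  q_multiplicative q f /\ forall n : nat, f (q * n)%nat = f n.

Fixpoint csum (g : nat -> C) (N : nat) : C :=
  match N with
  | O => (0, 0)
  | S k => Cplus (csum g k) (g k)
  end.

(* Write S(a, N) for the twisted sum of f up to N.  Strong q-multiplicativity gives
   S(a, qN) = S(a, q) S(qa, N), hence, up to an error O(q^2),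
   |S(a, N)| <= |S(a, q)| |S(qa, q)| |S(q^2 a, N / q^2)|.
   The continuous 1-periodic function b |-> |S(b, q)| |S(qb, q)| attains its maximum M <= q^2.
   If M = q^2 then at the maximum all terms of S(b, q) and of S(qb, q) are equal to the first
   one, i.e. f(d) = e(-bd) = e(-qbd) for every digit d; so (q-1)b is an integer and f is
   n |-> e(np/(q-1)) on digits, hence everywhere.  Otherwise M < q^2, and iterating the
   recursion yields |S(a, N)| << N^gamma with gamma = log M / log q^2 < 1. *)

From Stdlib Require Import Reals Lra Lia ZArith Classical.
From Coquelicot Require Import Coquelicot.
Open Scope R_scope.

Lemma e_add s t : e (s + t) = (e s * e t)%C.
Proof.
  unfold e, Cmult; simpl. rewrite Rmult_plus_distr_l, cos_plus, sin_plus.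
  f_equal; ring.
Qed.

Lemma e_0 : e 0 = 1%C.
Proof. unfold e. rewrite Rmult_0_r, cos_0, sin_0. reflexivity. Qed.

Lemma Cmod_e t : Cmod (e t) = 1.
Proof.
  unfold Cmod, e; cbn [fst snd].
  rewrite <- sqrt_1, <- (sin2_cos2 (2 * PI * t)). unfold Rsqr. f_equal; ring.
Qed.

Lemma e_IZR z : e (IZR z) = 1%C.
Proof.
  unfold e.
  replace (2 * PI * IZR z) with (2 * (IZR z * PI)) by ring.
  assert (Hsin : sin (IZR z * PI) = 0) by (apply sin_eq_0_1; exists z; reflexivity).
  rewrite cos_2a_sin, sin_2a, Hsin. unfold RtoC; f_equal; ring.
Qed.

Lemma e_plus_IZR t z : e (t + IZR z) = e t.
Proof. rewrite e_add, e_IZR. ring. Qed.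

Lemma e_eq_1 t : e t = 1%C -> exists k, t = IZR k.
Proof.
  unfold e, RtoC. intros [= Hcos _].
  replace (2 * PI * t) with (2 * (PI * t)) in Hcos by ring.
  rewrite cos_2a_sin in Hcos.
  destruct (sin_eq_0_0 (PI * t)) as [k Hk]; [nra|].
  exists k. apply (Rmult_eq_reg_l PI); [lra | pose proof PI_RGT_0; lra].
Qed.

Lemma Cmult_e_eq_1 z t : (z * e t)%C = 1%C -> z = e (- t).
Proof.
  intros H.
  transitivity (z * e t * e (- t))%C.
  - rewrite <- Cmult_assoc, <- e_add, Rplus_opp_r, e_0. ring.
  - rewrite H. ring.
Qed.

Lemma csum_0 g : csum g 0 = 0%C.
Proof. reflexivity. Qed.

Lemma csum_S g n : csum g (S n) = (csum g n + g n)%C.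
Proof. reflexivity. Qed.

Lemma csum_ext g h n :
  (forall j, (j < n)%nat -> g j = h j) -> csum g n = csum h n.
Proof.
  induction n as [|n IH]; intros H; [reflexivity|].
  rewrite !csum_S, IH, H; auto.
Qed.

Lemma csum_split g m n :
  csum g (m + n) = (csum g m + csum (fun j => g (m + j)%nat) n)%C.
Proof.
  induction n as [|n IH].
  - rewrite Nat.add_0_r, csum_0. ring.
  - rewrite Nat.add_succ_r, !csum_S, IH. ring.
Qed.

Lemma csum_mult_r g c n :
  csum (fun j => g j * c)%C n = (csum g n * c)%C.
Proof. induction n as [|n IH]; rewrite ?csum_S, ?csum_0, ?IH; ring. Qed.

Lemma Cmod_csum_le g n :
  (forall j, (j < n)%nat -> Cmod (g j) <= 1) -> Cmod (csum g n) <= INR n.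
Proof.
  induction n as [|n IH]; intros H.
  - rewrite csum_0, Cmod_0. simpl; lra.
  - rewrite csum_S, S_INR. eapply Rle_trans; [apply Cmod_triangle|].
    assert (Cmod (csum g n) <= INR n) by auto.
    assert (Cmod (g n) <= 1) by auto. lra.
Qed.

Lemma Cmod_csum_le_pair (u : nat -> C) n d : (0 < d < n)%nat ->
  (forall j, (j < n)%nat -> Cmod (u j) <= 1) ->
  Cmod (csum u n) <= Cmod (u 0%nat + u d)%C + INR n - 2.
Proof.
  intros Hd Hu.
  set (d' := (d - 1)%nat). set (k := (n - S d)%nat).
  assert (Hn : n = (1 + d' + 1 + k)%nat) by lia.
  assert (Hmid : Cmod (csum (fun j => u (1 + j)%nat) d') <= INR d')
    by (apply Cmod_csum_le; intros; apply Hu; lia).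
  assert (Htail : Cmod (csum (fun j => u (1 + d' + 1 + j)%nat) k) <= INR k)
    by (apply Cmod_csum_le; intros; apply Hu; lia).
  rewrite Hn, !csum_split, !csum_S, !csum_0. replace (1 + d' + 0)%nat with d by lia.
  replace (0 + u 0%nat + csum (fun j => u (1 + j)%nat) d' + (0 + u d)
           + csum (fun j => u (1 + d' + 1 + j)%nat) k)%C
    with (u 0%nat + u d + csum (fun j => u (1 + j)%nat) d'
          + csum (fun j => u (1 + d' + 1 + j)%nat) k)%C by ring.
  rewrite !plus_INR. simpl INR.
  pose proof (Cmod_triangle (u 0%nat + u d + csum (fun j => u (1 + j)%nat) d')
                (csum (fun j => u (1 + d' + 1 + j)%nat) k)).
  pose proof (Cmod_triangle (u 0%nat + u d) (csum (fun j => u (1 + j)%nat) d')).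
  lra.
Qed.

Lemma unimodular_eq_1 z : Cmod z = 1 -> 2 <= Cmod (1 + z)%C -> z = 1%C.
Proof.
  intros Hz H2.
  assert (Hsq : forall w : C, Cmod w * Cmod w = fst w ^ 2 + snd w ^ 2)
    by (intros w; apply sqrt_sqrt; destruct w; simpl; nra).
  pose proof (Hsq z) as Sz. pose proof (Hsq (1 + z)%C) as S1z.
  pose proof (Cmod_ge_0 (1 + z)%C).
  destruct z as [x y]. simpl in *. rewrite Hz in Sz.
  assert (x = 1) by nra. subst. unfold RtoC. f_equal. nra.
Qed.

Lemma csum_unimodular_eq_1 (u : nat -> C) n : u 0%nat = 1%C ->
  (forall j, (j < n)%nat -> Cmod (u j) = 1) ->
  INR n <= Cmod (csum u n) -> forall d, (d < n)%nat -> u d = 1%C.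
Proof.
  intros H0 Hu Hfull d Hd.
  destruct d as [|d]; [exact H0|].
  apply unimodular_eq_1; [auto|].
  rewrite <- H0.
  pose proof (Cmod_csum_le_pair u n (S d) ltac:(lia)
                ltac:(intros j Hj; rewrite Hu; auto; lra)).
  lra.
Qed.

Definition twisted_sum (f : nat -> C) (a : R) (N : nat) : C :=
  csum (fun n => f n * e (a * INR n))%C N.

Lemma continuity_pt_e_mul c x :
  continuity_pt (fun a => fst (e (a * c))) x /\ continuity_pt (fun a => snd (e (a * c))) x.
Proof. unfold e; cbn [fst snd]. split; reg. Qed.

Lemma continuity_pt_twisted_sum f N x :
  continuity_pt (fun a => fst (twisted_sum f a N)) x /\
  continuity_pt (fun a => snd (twisted_sum f a N)) x.
Proof.
  induction N as [|N [IHre IHim]].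
  - split; apply continuity_pt_const; intros ? ?; reflexivity.
  - destruct (continuity_pt_e_mul (INR N) x) as [Hre Him].
    change (fun a => fst (twisted_sum f a (S N))) with
      (fun a => fst (twisted_sum f a N)
                + (fst (f N) * fst (e (a * INR N)) - snd (f N) * snd (e (a * INR N)))).
    change (fun a => snd (twisted_sum f a (S N))) with
      (fun a => snd (twisted_sum f a N)
                + (fst (f N) * snd (e (a * INR N)) + snd (f N) * fst (e (a * INR N)))).
    split; repeat first [ apply continuity_pt_minus | apply continuity_pt_plus
                        | apply (continuity_pt_scal (fun a => fst (e (a * INR N))))
                        | apply (continuity_pt_scal (fun a => snd (e (a * INR N))))
                        | assumption ].
Qed.

Lemma continuity_pt_Cmod (g : R -> C) x :
  continuity_pt (fun t => fst (g t)) x -> continuity_pt (fun t => snd (g t)) x ->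
  continuity_pt (fun t => Cmod (g t)) x.
Proof.
  intros Hre Him. unfold Cmod.
  apply (continuity_pt_comp (fun t => fst (g t) ^ 2 + snd (g t) ^ 2) sqrt).
  - apply continuity_pt_plus; simpl; apply continuity_pt_mult; auto;
      apply continuity_pt_mult; auto; apply continuity_pt_const; intros ? ?; reflexivity.
  - apply continuity_pt_sqrt. nra.
Qed.

Lemma continuity_pt_Cmod_twisted_sum f N x :
  continuity_pt (fun a => Cmod (twisted_sum f a N)) x.
Proof.
  destruct (continuity_pt_twisted_sum f N x).
  apply (continuity_pt_Cmod (fun a => twisted_sum f a N)); assumption.
Qed.

Lemma twisted_sum_plus_IZR f a z N :
  twisted_sum f (a + IZR z) N = twisted_sum f a N.
Proof.
  apply csum_ext. intros n _.
  replace ((a + IZR z) * INR n) with (a * INR n + IZR (z * Z.of_nat n))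
    by (rewrite mult_IZR, <- INR_IZR_INZ; ring).
  rewrite e_plus_IZR. reflexivity.
Qed.

Lemma Cmod_twisted_sum_le f a N : unimodular f -> Cmod (twisted_sum f a N) <= INR N.
Proof.
  intros Hu. apply Cmod_csum_le. intros n _.
  rewrite Cmod_mult, Cmod_e, Hu. lra.
Qed.

Lemma e_opp_mul_eq_frac (m : nat) (b : R) (k : Z) : (0 < m)%nat ->
  INR m * b = IZR k ->
  exists p, (p < m)%nat /\ forall d : nat, e (- (b * INR d)) = e (INR d * (INR p / INR m)).
Proof.
  intros Hm Hk.
  assert (Hm' : (0 < Z.of_nat m)%Z) by lia.
  pose proof (Z.mod_pos_bound (- k) (Z.of_nat m) Hm') as Hr.
  pose proof (Z.div_mod (- k) (Z.of_nat m) ltac:(lia)) as Hdiv.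
  set (r := ((- k) mod Z.of_nat m)%Z) in *. set (w := ((- k) / Z.of_nat m)%Z) in *.
  clearbody r w. exists (Z.to_nat r). split; [lia|]. intros d.
  assert (HINR : INR (Z.to_nat r) = IZR r) by (rewrite INR_IZR_INZ, Z2Nat.id; [reflexivity | lia]).
  assert (HINm : 0 < INR m) by (apply lt_0_INR; lia).
  replace (- (b * INR d)) with (INR d * (INR (Z.to_nat r) / INR m) + IZR (Z.of_nat d * w)).
  { apply e_plus_IZR. }
  assert (Hb : b = IZR k / INR m) by (rewrite <- Hk; field; lra).
  rewrite Hb, HINR, mult_IZR, <- INR_IZR_INZ.
  replace (IZR k) with (- IZR (- k)) by (rewrite opp_IZR; ring).
  rewrite Hdiv, plus_IZR, mult_IZR, <- INR_IZR_INZ. field. lra.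
Qed.

Lemma e_frac_pred_mul_q (q m p : nat) : (2 <= q)%nat ->
  e (INR (q * m) * (INR p / INR (q - 1))) = e (INR m * (INR p / INR (q - 1))).
Proof.
  intros Hq.
  assert (Hq2 : 2 <= INR q) by (apply (le_INR 2); exact Hq).
  assert (Hq1 : INR (q - 1) = INR q - 1) by (rewrite minus_INR by lia; reflexivity).
  replace (INR (q * m) * (INR p / INR (q - 1)))
    with (INR m * (INR p / INR (q - 1)) + IZR (Z.of_nat (m * p))).
  { apply e_plus_IZR. }
  rewrite <- INR_IZR_INZ, !mult_INR, Hq1. field. lra.
Qed.

Definition linear_phase (q : nat) (f : nat -> C) : Prop :=
  exists p : nat, (p < q - 1)%nat /\
    forall n : nat, f n = e (INR n * INR p / INR (q - 1)).

Section StronglyMultiplicative.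

Variables (q : nat) (f : nat -> C).
Hypotheses (Hq : (2 <= q)%nat) (Hu : unimodular f)
  (Hf : strongly_q_multiplicative q f).

Lemma strongly_q_multiplicative_0 : f 0%nat = 1%C.
Proof.
  destruct Hf as [Hmul _].
  assert (Hsq : f 0%nat = (f 0%nat * f 0%nat)%C)
    by exact (Hmul 0%nat 0%nat 0%nat ltac:(simpl; lia) (Nat.divide_0_r _)).
  assert (Hnz : f 0%nat <> 0%C)
    by (intros H0; pose proof (Hu 0%nat) as H1; rewrite H0, Cmod_0 in H1; lra).
  transitivity (f 0%nat * f 0%nat * / f 0%nat)%C.
  - field. exact Hnz.
  - rewrite <- Hsq. field. exact Hnz.
Qed.

Lemma strongly_q_multiplicative_digit d m : (d < q)%nat ->
  f (d + q * m)%nat = (f d * f m)%C.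
Proof.
  destruct Hf as [Hmul Hscale]. intros Hd.
  rewrite (Hmul 1%nat), Hscale; [reflexivity | rewrite Nat.pow_1_r; exact Hd |].
  rewrite Nat.pow_1_r. exists m. ring.
Qed.

Lemma twisted_sum_mul_q a N :
  twisted_sum f a (q * N) = (twisted_sum f a q * twisted_sum f (INR q * a) N)%C.
Proof.
  unfold twisted_sum. induction N as [|N IH].
  - rewrite Nat.mul_0_r, !csum_0. ring.
  - replace (q * S N)%nat with (q * N + q)%nat by ring.
    assert (Hblock : csum (fun j => f (q * N + j)%nat * e (a * INR (q * N + j)))%C q
                     = (csum (fun j => f j * e (a * INR j)) q
                        * (f N * e (INR q * a * INR N)))%C).
    { rewrite <- csum_mult_r. apply csum_ext. intros j Hj.
      rewrite Nat.add_comm, strongly_q_multiplicative_digit, plus_INR, mult_INR by exact Hj.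
      replace (a * (INR j + INR q * INR N)) with (a * INR j + INR q * a * INR N) by ring.
      rewrite e_add. ring. }
    rewrite csum_split, IH, csum_S, Hblock. ring.
Qed.

Lemma Cmod_twisted_sum_le_step a N :
  Cmod (twisted_sum f a N)
    <= Cmod (twisted_sum f a q) * Cmod (twisted_sum f (INR q * a) (N / q)) + INR q.
Proof.
  assert (Hrem : (N mod q < q)%nat) by (apply Nat.mod_upper_bound; lia).
  unfold twisted_sum at 1. rewrite (Nat.div_mod N q) at 1 by lia. rewrite csum_split.
  fold (twisted_sum f a (q * (N / q))). rewrite twisted_sum_mul_q.
  eapply Rle_trans; [apply Cmod_triangle|]. rewrite Cmod_mult.
  apply Rplus_le_compat_l. eapply Rle_trans.
  - apply Cmod_csum_le. intros n _. rewrite Cmod_mult, Cmod_e, Hu. lra.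
  - apply le_INR. lia.
Qed.

Lemma Cmod_twisted_sum_le_two_step (M : R) a N :
  (forall b, Cmod (twisted_sum f b q) * Cmod (twisted_sum f (INR q * b) q) <= M) ->
  Cmod (twisted_sum f a N)
    <= M * Cmod (twisted_sum f (INR q * (INR q * a)) (N / q / q)) + INR q * INR q + INR q.
Proof.
  intros HM.
  pose proof (Cmod_twisted_sum_le_step a N).
  pose proof (Cmod_twisted_sum_le_step (INR q * a) (N / q)).
  pose proof (HM a).
  pose proof (Cmod_twisted_sum_le f a q Hu).
  pose proof (Cmod_ge_0 (twisted_sum f a q)).
  pose proof (Cmod_ge_0 (twisted_sum f (INR q * a) q)).
  pose proof (Cmod_ge_0 (twisted_sum f (INR q * (INR q * a)) (N / q / q))).
  nra.
Qed.

Lemma digits_of_full_twisted_sum b : INR q <= Cmod (twisted_sum f b q) ->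
  forall d, (d < q)%nat -> f d = e (- (b * INR d)).
Proof.
  intros Hfull d Hd. apply Cmult_e_eq_1.
  apply (csum_unimodular_eq_1 (fun n => f n * e (b * INR n))%C q); auto.
  - simpl INR. rewrite Rmult_0_r, e_0, strongly_q_multiplicative_0. ring.
  - intros n _. rewrite Cmod_mult, Cmod_e, Hu. ring.
Qed.

Lemma eq_e_of_digits c :
  (forall d, (d < q)%nat -> f d = e (INR d * c)) ->
  (forall m, e (INR (q * m) * c) = e (INR m * c)) ->
  forall n, f n = e (INR n * c).
Proof.
  intros Hdigit Hscale n.
  induction n as [n IH] using (well_founded_induction lt_wf).
  destruct (Nat.eq_dec n 0) as [->|Hn0]; [apply Hdigit; lia|].
  assert (Hmod : (n mod q < q)%nat) by (apply Nat.mod_upper_bound; lia).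
  assert (Hn : n = (n mod q + q * (n / q))%nat)
    by (rewrite Nat.add_comm; apply Nat.div_mod; lia).
  rewrite Hn at 1.
  rewrite strongly_q_multiplicative_digit, Hdigit, IH by (lia || apply Nat.div_lt; lia).
  rewrite <- (Hscale (n / q)%nat), <- e_add, <- Rmult_plus_distr_r, <- plus_INR, <- Hn. reflexivity.
Qed.

Lemma linear_phase_of_full_twisted_sums b :
  INR q <= Cmod (twisted_sum f b q) -> INR q <= Cmod (twisted_sum f (INR q * b) q) ->
  linear_phase q f.
Proof.
  intros Hb Hqb.
  pose proof (digits_of_full_twisted_sum b Hb) as Hdb.
  pose proof (digits_of_full_twisted_sum (INR q * b) Hqb) as Hdqb.
  (* Both descriptions of f 1 give e((q - 1) b) = 1. *)
  destruct (e_eq_1 (INR (q - 1) * b)) as [k Hk].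
  { replace (INR (q - 1) * b) with (- (b * INR 1) + - - (INR q * b * INR 1))
      by (rewrite minus_INR by lia; simpl; ring).
    rewrite e_add, <- Hdb, Hdqb, <- e_add, Rplus_opp_r, e_0 by lia. reflexivity. }
  destruct (e_opp_mul_eq_frac (q - 1) b k ltac:(lia) Hk) as [p [Hp Hphase]].
  exists p. split; [exact Hp|]. intros n.
  replace (INR n * INR p / INR (q - 1)) with (INR n * (INR p / INR (q - 1))) by (unfold Rdiv; ring).
  apply eq_e_of_digits.
  - intros d Hd. rewrite Hdb by exact Hd. apply Hphase.
  - intros m. apply e_frac_pred_mul_q, Hq.
Qed.

Lemma twisted_sum_pair_sup_lt : ~ linear_phase q f ->
  exists M, M < INR q * INR q /\
    forall b, Cmod (twisted_sum f b q) * Cmod (twisted_sum f (INR q * b) q) <= M.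
Proof.
  intros Hnot.
  set (G b := Cmod (twisted_sum f b q) * Cmod (twisted_sum f (INR q * b) q)).
  assert (HGper : forall b z, G (b + IZR z) = G b).
  { intros b z. unfold G.
    replace (INR q * (b + IZR z)) with (INR q * b + IZR (Z.of_nat q * z))
      by (rewrite mult_IZR, <- INR_IZR_INZ; ring).
    rewrite !twisted_sum_plus_IZR. reflexivity. }
  destruct (continuity_ab_maj G 0 1) as [b0 [Hmax _]]; [lra| |].
  { intros b _. apply continuity_pt_mult; [apply continuity_pt_Cmod_twisted_sum|].
    apply (continuity_pt_comp (fun b => INR q * b) (fun a => Cmod (twisted_sum f a q)));
      [reg | apply continuity_pt_Cmod_twisted_sum]. }
  exists (G b0). split.
  - apply Rnot_le_lt. intros Hfull. apply Hnot.
    apply (linear_phase_of_full_twisted_sums b0); unfold G in Hfull;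
      pose proof (Cmod_twisted_sum_le f b0 q Hu);
      pose proof (Cmod_twisted_sum_le f (INR q * b0) q Hu);
      pose proof (Cmod_ge_0 (twisted_sum f b0 q));
      pose proof (Cmod_ge_0 (twisted_sum f (INR q * b0) q));
      nra.
  - intros b. fold (G b).
    destruct (base_Int_part b) as [Hlo Hhi].
    replace b with (b - IZR (Int_part b) + IZR (Int_part b)) at 1 by ring.
    rewrite HGper. apply Hmax. lra.
Qed.

End StronglyMultiplicative.

Lemma recursion_Rpower_bound {X : Type} (F : X -> nat -> R) (sigma : X -> X)
    (r : nat) (M c gamma : R) :
  (2 <= r)%nat -> 1 < M -> 0 <= c -> 0 <= gamma -> Rpower (INR r) gamma = M ->
  (forall x N, 0 <= F x N <= INR N) ->
  (forall x N, F x N <= M * F (sigma x) (N / r)%nat + c) ->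
  forall N, (1 <= N)%nat -> forall x,
    F x N <= (INR r + c / (M - 1)) * Rpower (INR N) gamma - c / (M - 1).
Proof.
  intros Hr HM Hc Hgamma HrM HF Hstep.
  (* D is the fixed point of D |-> M D - c, which makes the bound reproduce itself. *)
  set (D := c / (M - 1)).
  assert (HD0 : 0 <= D) by (apply Rdiv_le_0_compat; lra).
  assert (HD : M * D - c = D) by (unfold D; field; lra).
  intros N. induction N as [N IH] using (well_founded_induction lt_wf). intros HN x.
  assert (HN1 : 1 <= INR N) by (apply (le_INR 1); exact HN).
  assert (HNg : 1 <= Rpower (INR N) gamma)
    by (rewrite <- (Rpower_O (INR N)) by lra; apply Rle_Rpower; lra).
  destruct (Nat.lt_ge_cases N r) as [Hsmall|Hlarge].
  - assert (INR N <= INR r) by (apply le_INR; lia).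
    pose proof (HF x N). pose proof (pos_INR r). nra.
  - set (N' := (N / r)%nat).
    assert (HN' : (1 <= N')%nat) by (apply Nat.div_str_pos; lia).
    assert (HN'N : (N' < N)%nat) by (apply Nat.div_lt; lia).
    assert (HrN' : (r * N' <= N)%nat) by apply Nat.Div0.mul_div_le.
    pose proof (IH N' HN'N HN' (sigma x)) as HIH.
    pose proof (Hstep x N) as Hx. fold N' in Hx.
    pose proof (HF (sigma x) N').
    assert (Hpow : M * Rpower (INR N') gamma <= Rpower (INR N) gamma).
    { assert (0 < INR N') by (apply lt_0_INR; lia).
      assert (0 < INR r) by (apply lt_0_INR; lia).
      rewrite <- HrM, Rpower_mult_distr by (apply lt_0_INR; lia).
      apply Rle_Rpower_l; [exact Hgamma|]. split; [nra|].
      rewrite <- mult_INR. apply le_INR. exact HrN'. }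
    assert (0 <= INR r + D) by (pose proof (pos_INR r); lra).
    nra.
Qed.

Lemma sublinear_of_recursion {X : Type} (F : X -> nat -> R) (sigma : X -> X)
    (r : nat) (M c : R) :
  (2 <= r)%nat -> M < INR r -> 0 <= c ->
  (forall x N, 0 <= F x N <= INR N) ->
  (forall x N, F x N <= M * F (sigma x) (N / r)%nat + c) ->
  exists gamma, gamma < 1 /\
    exists K, forall N, (1 <= N)%nat -> forall x, F x N <= K * Rpower (INR N) gamma.
Proof.
  intros Hr HMr Hc HF Hstep.
  assert (Hr2 : 2 <= INR r) by (apply (le_INR 2); exact Hr).
  (* Enlarging M to some M' in (1, r) keeps gamma >= 0 and D = c / (M' - 1) finite. *)
  set (M' := Rmax M ((1 + INR r) / 2)).
  assert (HMM' : M <= M') by apply Rmax_l.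
  assert (HM'1 : 1 < M') by (eapply Rlt_le_trans; [|apply Rmax_r]; lra).
  assert (HM'r : M' < INR r) by (apply Rmax_lub_lt; lra).
  assert (Hlnr : 0 < ln (INR r)) by (rewrite <- ln_1; apply ln_increasing; lra).
  assert (HlnM' : 0 < ln M') by (rewrite <- ln_1; apply ln_increasing; lra).
  assert (HlnM'r : ln M' < ln (INR r)) by (apply ln_increasing; lra).
  set (gamma := ln M' / ln (INR r)).
  assert (HrM' : Rpower (INR r) gamma = M').
  { unfold Rpower, gamma. replace (ln M' / ln (INR r) * ln (INR r)) with (ln M')
      by (field; lra).
    apply exp_ln. lra. }
  exists gamma. split.
  { unfold gamma. apply (Rmult_lt_reg_r (ln (INR r))); [lra|].
    replace (ln M' / ln (INR r) * ln (INR r)) with (ln M') by (field; lra). lra. }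
  exists (INR r + c / (M' - 1)). intros N HN x.
  assert (HD : 0 <= c / (M' - 1)) by (apply Rdiv_le_0_compat; lra).
  assert (Hstep' : forall x N, F x N <= M' * F (sigma x) (N / r)%nat + c).
  { intros y K. pose proof (Hstep y K). pose proof (HF (sigma y) (K / r)%nat).
    nra. }
  pose proof (recursion_Rpower_bound F sigma r M' c gamma Hr HM'1 Hc
                ltac:(unfold gamma; apply Rdiv_le_0_compat; lra) HrM' HF Hstep' N HN x).
  lra.
Qed.

Theorem proposition6p1 (q : nat) (f : nat -> C) :
  (2 <= q)%nat ->
  unimodular f ->
  strongly_q_multiplicative q f ->
  (exists p : nat, (p < q - 1)%nat /\
     forall n : nat, f n = e (INR n * INR p / INR (q - 1)))
  \/
  (exists gamma : R, gamma < 1 /\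
     exists K : R, forall (N : nat), (1 <= N)%nat -> forall alpha : R,
       Cmod (csum (fun n => Cmult (f n) (e (alpha * INR n))) N)
         <= K * Rpower (INR N) gamma).
Proof.
  intros Hq Hu Hf.
  destruct (classic (linear_phase q f)) as [Hphase|Hnot]; [left; exact Hphase | right].
  destruct (twisted_sum_pair_sup_lt q f Hq Hu Hf Hnot) as [M [HMq HM]].
  apply (sublinear_of_recursion (fun a N => Cmod (twisted_sum f a N))
           (fun a => INR q * (INR q * a)) (q * q) M (INR q * INR q + INR q)).
  - nia.
  - rewrite mult_INR. exact HMq.
  - pose proof (pos_INR q). nra.
  - intros a N. split; [apply Cmod_ge_0 | apply Cmod_twisted_sum_le, Hu].
  - intros a N. rewrite <- Nat.Div0.div_div.
    pose proof (Cmod_twisted_sum_le_two_step q f Hq Hu Hf M a N HM). lra.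
Qed.
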